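(* Let $R$ be a triad hexagon with focal points $A$ (top), $B$ (bottom left), $C$ (bottom right), with bowties of types $(a,a')$ at $A$, $(b,b')$ at $B$, $(c,c')$ at $C$. Define its S-depth, NE-depth and NW-depth to be $$\delta(BC,S)-b-c,\qquad \delta(AC,NE)-a-c,\qquad \delta(AB,NW)-a-b,$$ respectively. Then: (a) $R$ is tileable (admits at least one lozenge tiling) if and only if its S-depth, NE-depth and NW-depth are all non-negative. (b) The S-depth, NE-depth and NW-depth of a triad hexagon are unchanged by any bowtie squeezing operation. (c) If $R$ is tileable, then every triad hexagon obtained from $R$ by a finite sequence of bowtie squeezings is also tileable.
   Context: Work on the triangular lattice, drawn with one family of lattice lines horizontal; unit triangles are up-pointing or down-pointing. A lozenge is the union of two unit triangles sharing an edge. Lengths of lattice segments are measured in unit-triangle side lengths; distances from a point or a segment to a lattice line parallel to it (or to a side of a hexagon) are measured in lattice spacings (the distance between consecutive parallel lattice lines counts as 1). The sides of a lattice hexagon with horizontal top and bottom are called N, NE, SE, S, SW, NW (clockwise from the top); $\delta(P,N)$ denotes the distance from a point or segment $P$ to the line containing the N side, and similarly for the other sides. Triad hexagons. Let $x,y,z,a,b,c,a',b',c'$ be non-negative integers. Let $A,B,C$ be lattice points forming an up-pointing equilateral lattice triangle of side $f$ ($A$ the top vertex, $B$ the bottom-left, $C$ the bottom-right), with $f\ge a'+b'+c'$; $f$ is the focal distance, $A,B,C$ the focal points, $AB,AC,BC$ the focal edges. The $(a,a')$-bowtie at $A$ is the union of the down-pointing lattice triangle of side $a$ with bottom vertex $A$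 and the up-pointing lattice triangle of side $a'$ with top vertex $A$. The $(b,b')$-bowtie at $B$ is the union of the up-pointing triangle of side $b'$ with bottom-left vertex $B$ and the down-pointing triangle of side $b$ with top-right vertex $B$. The $(c,c')$-bowtie at $C$ is the union of the up-pointing triangle of side $c'$ with bottom-right vertex $C$ and the down-pointing triangle of side $c$ with top-left vertex $C$. (Triangles of side $0$ are empty; the lobes of sides $a',b',c'$ are called inner lobes, those of sides $a,b,c$ outer lobes.) Let $H$ be a lattice hexagon with side lengths N: $x+a+b+c$, NE: $y+a'+b'+c'$, SE: $z+a+b+c$, S: $x+a'+b'+c'$, SW: $y+a+b+c$, NW: $z+a'+b'+c'$, containing the three bowties. The triad hexagon $R^{A,B,C}_{x,y,z}(a,b,c,a',b',c')$ is $H$ with the three bowties removed. Bowtie squeezing. Squeezing out the bowtie at $A$ by $d$ units ($0\le d\le a'$): keep $A$ fixed and replace the $(a,a')$-bowtie by an $(a+d,a'-d)$-bowtie; translate the bowtie at $B$ by $d$ units in the direction of $\overrightarrow{BA}$ and the bowtie at $C$ by $d$ units in the direction of $\overrightarrow{CA}$ (so the focal distance becomes $f-d$); translate the N, NW, NE sides of the hexagon outward by $d$ lattice spacings and the S, SW, SE sides inward by $d$ lattice spacings. Squeezing out the bowtie at $B$ by $d\le b'$ is defined symmetrically: $B$ fixed, $(b,b')\to(b+d,b'-d)$, bowties at $A$ and $C$ translated $d$ units in the directions $\overrightarrow{AB}$, $\overrightarrow{CB}$, sides SW, NW, S moved outward and NE, N, SE moved inward by $d$ lattice spacings. Squeezing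 out the bowtie at $C$ by $d\le c'$: $C$ fixed, $(c,c')\to(c+d,c'-d)$, bowties at $A$ and $B$ translated $d$ units in the directions $\overrightarrow{AC}$, $\overrightarrow{BC}$, sides SE, NE, S moved outward and NW, N, SW moved inward by $d$ lattice spacings. Squeezing in a bowtie by $d$ units (with $d$ at most the size of its outer lobe) is the inverse operation. Each of these operations produces again a triad hexagon (with the same $x,y,z$). A bowtie squeezing means any of these operations. *)

From Stdlib Require Import ZArith List Relations.
Import ListNotations.
Open Scope Z_scope.

(* The lattice point with coordinates (i,j) is
   i*e1 + j*e2 with e1 = (1,0), e2 = (1/2, sqrt 3/2).  Lattice lines are
   j = const (horizontal), i = const (direction e2) and i+j = const
   (direction e2 - e1); consecutive parallel lattice lines differ by 1. *)
Definition point := (Z * Z)%type.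

Inductive tri := Up (i j : Z) | Down (i j : Z).

Definition verts (t : tri) : list point :=
  match t with
  | Up i j => [(i, j); (i + 1, j); (i, j + 1)]
  | Down i j => [(i + 1, j); (i, j + 1); (i + 1, j + 1)]
  end.

(* two distinct unit triangles sharing an edge (= two common vertices) *)
Definition adjacent (t u : tri) : Prop :=
  t <> u /\ exists v w : point, v <> w /\
    In v (verts t) /\ In w (verts t) /\ In v (verts u) /\ In w (verts u).

Definition region := tri -> Prop.

Definition lozenge_tiling (R : region) (L : tri * tri -> Prop) : Prop :=
  (forall p, L p -> adjacent (fst p) (snd p) /\ R (fst p) /\ R (snd p)) /\
  (forall s, R s -> exists! p, L p /\ (s = fst p \/ s = snd p)).

Definition tileable (R : region) : Prop := exists L, lozenge_tiling R L.

(* a unit triangle lies in a (convex, closed) point set P iff all its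
   vertices do *)
Definition tri_in (P : point -> Prop) (t : tri) : Prop :=
  forall v, In v (verts t) -> P v.

(* up-pointing lattice triangle of side s with bottom-left vertex P *)
Definition up_pts (P : point) (s : Z) (v : point) : Prop :=
  fst P <= fst v /\ snd P <= snd v /\ fst v + snd v <= fst P + snd P + s.

(* down-pointing lattice triangle of side s with top-left vertex P *)
Definition down_pts (P : point) (s : Z) (v : point) : Prop :=
  snd v <= snd P /\ fst v <= fst P + s /\ fst P + snd P <= fst v + snd v.

(* The hexagon H is the intersection of the
   strips  hS <= j <= hN  (S and N sides),  hW <= i <= hE  (NW and SE
   sides),  hSW <= i+j <= hNE  (SW and NE sides).  The focal points are
   A = tA, B = A - f e2, C = A + f (e1 - e2). *)
Record triad := mkTriad {
  tx : nat; ty : nat; tz : nat;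
  ta : nat; tb : nat; tc : nat;
  ta' : nat; tb' : nat; tc' : nat;
  tf : nat;
  tA : point;
  hN : Z; hS : Z; hW : Z; hE : Z; hSW : Z; hNE : Z }.

Definition ptA (T : triad) : point := tA T.
Definition ptB (T : triad) : point := (fst (tA T), snd (tA T) - Z.of_nat (tf T)).
Definition ptC (T : triad) : point :=
  (fst (tA T) + Z.of_nat (tf T), snd (tA T) - Z.of_nat (tf T)).

Definition hex_pts (T : triad) (v : point) : Prop :=
  hS T <= snd v <= hN T /\ hW T <= fst v <= hE T /\
  hSW T <= fst v + snd v <= hNE T.

Definition lobeA_out (T : triad) := (* down, side a, bottom vertex A *)
  down_pts (fst (ptA T) - Z.of_nat (ta T), snd (ptA T) + Z.of_nat (ta T)) (Z.of_nat (ta T)).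
Definition lobeA_in (T : triad) := (* up, side a', top vertex A *)
  up_pts (fst (ptA T), snd (ptA T) - Z.of_nat (ta' T)) (Z.of_nat (ta' T)).
Definition lobeB_in (T : triad) :=
  up_pts (ptB T) (Z.of_nat (tb' T)).
Definition lobeB_out (T : triad) := (* down, side b, top-right vertex B *)
  down_pts (fst (ptB T) - Z.of_nat (tb T), snd (ptB T)) (Z.of_nat (tb T)).
Definition lobeC_in (T : triad) := (* up, side c', bottom-right vertex C *)
  up_pts (fst (ptC T) - Z.of_nat (tc' T), snd (ptC T)) (Z.of_nat (tc' T)).
Definition lobeC_out (T : triad) :=
  down_pts (ptC T) (Z.of_nat (tc T)).

Definition lobes (T : triad) : list (point -> Prop) :=
  [lobeA_out T; lobeA_in T; lobeB_in T; lobeB_out T; lobeC_in T; lobeC_out T].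

(* Validity: focal distance condition, side lengths of H, and H contains
   the three bowties. *)
Definition is_triad (T : triad) : Prop :=
  let n := Z.of_nat in
  (tf T >= ta' T + tb' T + tc' T)%nat /\
  (* N  *) hNE T - hN T - hW T = n (tx T + ta T + tb T + tc T)%nat /\
  (* NE *) hN T + hE T - hNE T = n (ty T + ta' T + tb' T + tc' T)%nat /\
  (* SE *) hNE T - hE T - hS T = n (tz T + ta T + tb T + tc T)%nat /\
  (* S  *) hE T - hSW T + hS T = n (tx T + ta' T + tb' T + tc' T)%nat /\
  (* SW *) hSW T - hW T - hS T = n (ty T + ta T + tb T + tc T)%nat /\
  (* NW *) hN T - hSW T + hW T = n (tz T + ta' T + tb' T + tc' T)%nat /\
  (forall P, In P (lobes T) -> forall v, P v -> hex_pts T v).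

Definition triad_region (T : triad) : region :=
  fun t => tri_in (hex_pts T) t /\ ~ (exists P, In P (lobes T) /\ tri_in P t).

Definition S_depth (T : triad) : Z :=
  (snd (ptB T) - hS T) - Z.of_nat (tb T) - Z.of_nat (tc T).
Definition NE_depth (T : triad) : Z :=
  (hNE T - (fst (ptA T) + snd (ptA T))) - Z.of_nat (ta T) - Z.of_nat (tc T).
Definition NW_depth (T : triad) : Z :=
  (fst (ptA T) - hW T) - Z.of_nat (ta T) - Z.of_nat (tb T).

Definition sq_out_A (d : nat) (T : triad) : triad :=
  let e := Z.of_nat d in
  {| tx := tx T; ty := ty T; tz := tz T;
     ta := ta T + d; tb := tb T; tc := tc T;
     ta' := ta' T - d; tb' := tb' T; tc' := tc' T;
     tf := tf T - d; tA := tA T;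
     hN := hN T + e; hW := hW T - e; hNE := hNE T + e;
     hS := hS T + e; hSW := hSW T + e; hE := hE T - e |}.
Definition sq_in_A (d : nat) (T : triad) : triad :=
  let e := Z.of_nat d in
  {| tx := tx T; ty := ty T; tz := tz T;
     ta := ta T - d; tb := tb T; tc := tc T;
     ta' := ta' T + d; tb' := tb' T; tc' := tc' T;
     tf := tf T + d; tA := tA T;
     hN := hN T - e; hW := hW T + e; hNE := hNE T - e;
     hS := hS T - e; hSW := hSW T - e; hE := hE T + e |}.
Definition sq_out_B (d : nat) (T : triad) : triad :=
  let e := Z.of_nat d in
  {| tx := tx T; ty := ty T; tz := tz T;
     ta := ta T; tb := tb T + d; tc := tc T;
     ta' := ta' T; tb' := tb' T - d; tc' := tc' T;
     tf := tf T - d; tA := (fst (tA T), snd (tA T) - e);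
     hSW := hSW T - e; hW := hW T - e; hS := hS T - e;
     hNE := hNE T - e; hN := hN T - e; hE := hE T - e |}.
Definition sq_in_B (d : nat) (T : triad) : triad :=
  let e := Z.of_nat d in
  {| tx := tx T; ty := ty T; tz := tz T;
     ta := ta T; tb := tb T - d; tc := tc T;
     ta' := ta' T; tb' := tb' T + d; tc' := tc' T;
     tf := tf T + d; tA := (fst (tA T), snd (tA T) + e);
     hSW := hSW T + e; hW := hW T + e; hS := hS T + e;
     hNE := hNE T + e; hN := hN T + e; hE := hE T + e |}.
Definition sq_out_C (d : nat) (T : triad) : triad :=
  let e := Z.of_nat d in
  {| tx := tx T; ty := ty T; tz := tz T;
     ta := ta T; tb := tb T; tc := tc T + d;
     ta' := ta' T; tb' := tb' T; tc' := tc' T - d;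
     tf := tf T - d; tA := (fst (tA T) + e, snd (tA T) - e);
     hE := hE T + e; hNE := hNE T + e; hS := hS T - e;
     hW := hW T + e; hN := hN T - e; hSW := hSW T + e |}.
Definition sq_in_C (d : nat) (T : triad) : triad :=
  let e := Z.of_nat d in
  {| tx := tx T; ty := ty T; tz := tz T;
     ta := ta T; tb := tb T; tc := tc T - d;
     ta' := ta' T; tb' := tb' T; tc' := tc' T + d;
     tf := tf T + d; tA := (fst (tA T) - e, snd (tA T) + e);
     hE := hE T - e; hNE := hNE T - e; hS := hS T + e;
     hW := hW T - e; hN := hN T + e; hSW := hSW T - e |}.

Inductive squeezing : triad -> triad -> Prop :=
| SqOutA d T : (d <= ta' T)%nat -> squeezing T (sq_out_A d T)
| SqInA  d T : (d <= ta T)%nat  -> squeezing T (sq_in_A d T)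
| SqOutB d T : (d <= tb' T)%nat -> squeezing T (sq_out_B d T)
| SqInB  d T : (d <= tb T)%nat  -> squeezing T (sq_in_B d T)
| SqOutC d T : (d <= tc' T)%nat -> squeezing T (sq_out_C d T)
| SqInC  d T : (d <= tc T)%nat  -> squeezing T (sq_in_C d T).

Definition triad_squeezing (T T' : triad) : Prop :=
  is_triad T /\ is_triad T' /\ squeezing T T'.

(* Sufficiency is proved by induction.  Unless the region has the base shape below, it is
   obtained from a smaller admissible one by adding a strip of width one along the boundary
   of the hexagon, and the strip has an explicit lozenge tiling given by a local rule.  The
   base case, with no outer lobes and the N, SW, SE sides through A, B, C, is tiled by a
   local rule as well.

   Necessity of S-depth >= 0: a lozenge meets at most two consecutive rows, so in the rows
   below the focal edge BC the up triangles inject into the down triangles.  But such a row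
   of the hexagon has one more down than up triangle, and each row meeting the outer lobe at
   B or at C loses one more down than up triangle; hence there are at least b + c rows.  The
   other two depths follow by rotating by 120 degrees.  Squeezings visibly preserve the
   depths, which gives (b), and (c) follows from (a) and (b). *)

From Stdlib Require Import ZArith List Relations.
From Stdlib Require Import Lia Classical ClassicalEpsilon FinFun.
Import ListNotations.
Open Scope Z_scope.

(** * Lozenge tilings given by local rules *)

Lemma tileable_ext (R R' : region) :
  (forall t, R t <-> R' t) -> tileable R -> tileable R'.
Proof.
  intros HR [L [Hloz Hcov]]. exists L. split.
  - intros p Hp. destruct (Hloz p Hp) as (Hadj & H1 & H2).
    split; [exact Hadj|]. split; apply HR; assumption.
  - intros s Hs. apply HR in Hs. exact (Hcov s Hs).
Qed.

Lemma tileable_disjoint_union (R R1 R2 : region) :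
  (forall t, R t <-> R1 t \/ R2 t) -> (forall t, R1 t -> R2 t -> False) ->
  tileable R1 -> tileable R2 -> tileable R.
Proof.
  intros HR Hdisj [L1 [Hloz1 Hcov1]] [L2 [Hloz2 Hcov2]].
  exists (fun p => L1 p \/ L2 p). split.
  - intros p [Hp|Hp].
    + destruct (Hloz1 p Hp) as (Hadj & H1 & H2). split; [exact Hadj|]. split; apply HR; auto.
    + destruct (Hloz2 p Hp) as (Hadj & H1 & H2). split; [exact Hadj|]. split; apply HR; auto.
  - intros s Hs. apply HR in Hs. destruct Hs as [Hs|Hs].
    + destruct (Hcov1 s Hs) as [p [[Hp Hsp] Huniq]]. exists p. split; [auto|].
      intros p' [[Hp'|Hp'] Hsp']; [apply Huniq; auto|exfalso].
      destruct (Hloz2 p' Hp') as (_ & H1 & H2).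
      destruct Hsp' as [->| ->]; eauto.
    + destruct (Hcov2 s Hs) as [p [[Hp Hsp] Huniq]]. exists p. split; [auto|].
      intros p' [[Hp'|Hp'] Hsp']; [exfalso|apply Huniq; auto].
      destruct (Hloz1 p' Hp') as (_ & H1 & H2).
      destruct Hsp' as [->| ->]; eauto.
Qed.

Lemma adjacent_sym t u : adjacent t u -> adjacent u t.
Proof.
  intros [Hne [v [w [Hvw Hin]]]]. split; [congruence|]. exists v, w. tauto.
Qed.

Lemma adjacent_Up_Down_below i j : adjacent (Up i j) (Down i (j-1)).
Proof.
  split; [discriminate|]. exists (i, j), (i+1, j). split; [intros E; inversion E; lia|].
  simpl. replace (j - 1 + 1) with j by lia. tauto.
Qed.

Lemma adjacent_Up_Down_left i j : adjacent (Up i j) (Down (i-1) j).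
Proof.
  split; [discriminate|]. exists (i, j), (i, j+1). split; [intros E; inversion E; lia|].
  simpl. replace (i - 1 + 1) with i by lia. tauto.
Qed.

Lemma adjacent_Up_Down_right i j : adjacent (Up i j) (Down i j).
Proof.
  split; [discriminate|]. exists (i+1, j), (i, j+1). split; [intros E; inversion E; lia|].
  simpl. tauto.
Qed.

Ltac shared_edge_cases :=
  match goal with
  | H : adjacent _ _ |- _ =>
    let Hne := fresh in let v := fresh in let w := fresh in let Hvw := fresh in
    let A := fresh in let B := fresh in let C := fresh in let D := fresh in
    destruct H as [Hne [v [w [Hvw [A [B [C D]]]]]]]; simpl in A, B, C, D;
    destruct A as [A|[A|[A|[]]]]; destruct B as [B|[B|[B|[]]]];
    destruct C as [C|[C|[C|[]]]]; destruct D as [D|[D|[D|[]]]]; subst v w;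
    try (exfalso; apply Hvw; reflexivity);
    repeat match goal with E : (_, _) = (_, _) |- _ => injection E; clear E; intros end
  end.

Lemma adjacent_Up_cases i j t : adjacent (Up i j) t ->
  t = Down i j \/ t = Down (i-1) j \/ t = Down i (j-1).
Proof.
  intros H. pose proof (proj1 H) as Hne.
  destruct t as [i' j'|i' j'].
  - exfalso. apply Hne.
    assert (i = i' /\ j = j') as [-> ->] by (shared_edge_cases; lia). reflexivity.
  - assert ((i' = i /\ j' = j) \/ (i' = i - 1 /\ j' = j) \/ (i' = i /\ j' = j - 1))
      as [[-> ->]|[[-> ->]|[-> ->]]] by (shared_edge_cases; lia); auto.
Qed.

Lemma not_adjacent_Down_Down i j i' j' : ~ adjacent (Down i j) (Down i' j').
Proof.
  intros H. pose proof (proj1 H) as Hne. apply Hne.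
  assert (i = i' /\ j = j') as [-> ->] by (shared_edge_cases; lia). reflexivity.
Qed.

(* A tiling given by a local rule: the up triangle [Up i j] is matched across its right
   edge with [Down i j] if [onRight i j], else across its left edge with [Down (i-1) j] if
   [onLeft i j], else across its bottom edge with [Down i (j-1)]. *)
Section RuleTiling.
Variable R : region.
Variables onRight onLeft : Z -> Z -> Prop.

Definition to_right i j := onRight i j.
Definition to_left i j := ~ onRight i j /\ onLeft i j.
Definition to_below i j := ~ onRight i j /\ ~ onLeft i j.

Definition rule_lozenges (p : tri * tri) : Prop :=
  exists i j, R (Up i j) /\
   ((to_below i j /\ p = (Up i j, Down i (j-1))) \/
    (to_left i j /\ p = (Up i j, Down (i-1) j)) \/
    (to_right i j /\ p = (Up i j, Down i j))).

Hypothesis partner_in : forall i j, R (Up i j) ->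
  (to_below i j -> R (Down i (j-1))) /\ (to_left i j -> R (Down (i-1) j)) /\
  (to_right i j -> R (Down i j)).
Hypothesis Down_matched : forall i j, R (Down i j) ->
  (R (Up i (j+1)) /\ to_below i (j+1)) \/ (R (Up (i+1) j) /\ to_left (i+1) j) \/
  (R (Up i j) /\ to_right i j).
Hypothesis Down_matched_once : forall i j, R (Down i j) ->
  ~ ((R (Up i (j+1)) /\ to_below i (j+1)) /\ (R (Up (i+1) j) /\ to_left (i+1) j)) /\
  ~ ((R (Up i (j+1)) /\ to_below i (j+1)) /\ (R (Up i j) /\ to_right i j)) /\
  ~ ((R (Up (i+1) j) /\ to_left (i+1) j) /\ (R (Up i j) /\ to_right i j)).

Lemma rule_lozenge_of_Up i j p : rule_lozenges p -> Up i j = fst p \/ Up i j = snd p ->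
  (to_below i j /\ p = (Up i j, Down i (j-1))) \/
  (to_left i j /\ p = (Up i j, Down (i-1) j)) \/
  (to_right i j /\ p = (Up i j, Down i j)).
Proof.
  intros (i' & j' & _ & Hp) Hin.
  destruct Hp as [[Ht ->]|[[Ht ->]|[Ht ->]]]; simpl in Hin;
    destruct Hin as [E|E]; inversion E; subst; auto.
Qed.

Lemma rule_lozenge_of_Down i j p : rule_lozenges p -> Down i j = fst p \/ Down i j = snd p ->
  (R (Up i (j+1)) /\ to_below i (j+1) /\ p = (Up i (j+1), Down i j)) \/
  (R (Up (i+1) j) /\ to_left (i+1) j /\ p = (Up (i+1) j, Down i j)) \/
  (R (Up i j) /\ to_right i j /\ p = (Up i j, Down i j)).
Proof.
  intros (i' & j' & HR & Hp) Hin.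
  destruct Hp as [[Ht ->]|[[Ht ->]|[Ht ->]]]; simpl in Hin;
    destruct Hin as [E|E]; inversion E; subst.
  - left. replace (j' - 1 + 1) with j' by lia. auto.
  - right; left. replace (i' - 1 + 1) with i' by lia. auto.
  - right; right. auto.
Qed.

Lemma rule_covers_Up i j : R (Up i j) ->
  exists! p, rule_lozenges p /\ (Up i j = fst p \/ Up i j = snd p).
Proof.
  intros HR.
  assert (Hex : exists d, rule_lozenges (Up i j, d)).
  { unfold rule_lozenges, to_below, to_left, to_right.
    destruct (classic (onRight i j)); [|destruct (classic (onLeft i j))]; eexists;
      exists i, j; split; eauto 6. }
  destruct Hex as [d Hd]. exists (Up i j, d). split; [simpl; auto|].
  intros p' [Hp' Hin'].
  destruct (rule_lozenge_of_Up i j _ Hd (or_introl eq_refl)) as [[? E]|[[? E]|[? E]]];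
  destruct (rule_lozenge_of_Up i j _ Hp' Hin') as [[? ->]|[[? ->]|[? ->]]];
  inversion E; subst; unfold to_below, to_left, to_right in *; first [reflexivity | tauto].
Qed.

Lemma rule_covers_Down i j : R (Down i j) ->
  exists! p, rule_lozenges p /\ (Down i j = fst p \/ Down i j = snd p).
Proof.
  intros HR. destruct (Down_matched_once i j HR) as (N1 & N2 & N3).
  assert (Hex : exists p, rule_lozenges p /\ Down i j = snd p).
  { destruct (Down_matched i j HR) as [[HU Ht]|[[HU Ht]|[HU Ht]]].
    - exists (Up i (j+1), Down i (j+1-1)). split; [exists i, (j+1); auto|].
      simpl. f_equal. lia.
    - exists (Up (i+1) j, Down (i+1-1) j). split; [exists (i+1), j; auto|].
      simpl. f_equal. lia.
    - exists (Up i j, Down i j). split; [exists i, j; auto|reflexivity]. }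
  destruct Hex as [p [Hp Hin]]. exists p. split; [auto|].
  intros p' [Hp' Hin'].
  destruct (rule_lozenge_of_Down i j p Hp (or_intror Hin))
    as [(? & ? & ->)|[(? & ? & ->)|(? & ? & ->)]];
  destruct (rule_lozenge_of_Down i j p' Hp' Hin')
    as [(? & ? & ->)|[(? & ? & ->)|(? & ? & ->)]];
  tauto.
Qed.

Lemma tileable_of_rule : tileable R.
Proof.
  exists rule_lozenges. split.
  - intros p (i & j & HR & Hp). destruct (partner_in i j HR) as (Hb & Hl & Hr).
    destruct Hp as [[Ht ->]|[[Ht ->]|[Ht ->]]]; simpl.
    + split; [apply adjacent_Up_Down_below|auto].
    + split; [apply adjacent_Up_Down_left|auto].
    + split; [apply adjacent_Up_Down_right|auto].
  - intros [i j|i j]; [apply rule_covers_Up|apply rule_covers_Down].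
Qed.
End RuleTiling.

(** * Triad regions with integer parameters *)

(* An integer-valued copy of a triad: A = (pu, pv), focal distance pf, the six lobe sizes
   and the six lines of the hexagon.  Integer fields let us add or remove strips freely. *)
Record params := mkParams { pu : Z; pv : Z; pf : Z; pa : Z; pb : Z; pc : Z;
  pa' : Z; pb' : Z; pc' : Z; phW : Z; phE : Z; phS : Z; phN : Z; phSW : Z; phNE : Z }.

Definition tri_on (P : Z -> Z -> Prop) (t : tri) : Prop :=
  match t with
  | Up i j => P i j /\ P (i+1) j /\ P i (j+1)
  | Down i j => P (i+1) j /\ P i (j+1) /\ P (i+1) (j+1)
  end.

Definition in_hex (p : params) (i j : Z) : Prop :=
  phS p <= j <= phN p /\ phW p <= i <= phE p /\ phSW p <= i + j <= phNE p.
Definition in_up (pi pj s i j : Z) : Prop := pi <= i /\ pj <= j /\ i + j <= pi + pj + s.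
Definition in_down (pi pj s i j : Z) : Prop := j <= pj /\ i <= pi + s /\ pi + pj <= i + j.

Definition lobeAo p := in_down (pu p - pa p) (pv p + pa p) (pa p).
Definition lobeAi p := in_up (pu p) (pv p - pa' p) (pa' p).
Definition lobeBi p := in_up (pu p) (pv p - pf p) (pb' p).
Definition lobeBo p := in_down (pu p - pb p) (pv p - pf p) (pb p).
Definition lobeCi p := in_up (pu p + pf p - pc' p) (pv p - pf p) (pc' p).
Definition lobeCo p := in_down (pu p + pf p) (pv p - pf p) (pc p).

Definition params_region (p : params) (t : tri) : Prop :=
  tri_on (in_hex p) t /\ ~ tri_on (lobeAo p) t /\ ~ tri_on (lobeAi p) t /\
  ~ tri_on (lobeBi p) t /\ ~ tri_on (lobeBo p) t /\ ~ tri_on (lobeCi p) t /\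
  ~ tri_on (lobeCo p) t.

Definition params_of_triad (T : triad) : params :=
  {| pu := fst (tA T); pv := snd (tA T); pf := Z.of_nat (tf T);
     pa := Z.of_nat (ta T); pb := Z.of_nat (tb T); pc := Z.of_nat (tc T);
     pa' := Z.of_nat (ta' T); pb' := Z.of_nat (tb' T); pc' := Z.of_nat (tc' T);
     phW := hW T; phE := hE T; phS := hS T; phN := hN T; phSW := hSW T; phNE := hNE T |}.

Lemma tri_in_tri_on (P : point -> Prop) (Q : Z -> Z -> Prop) t :
  (forall i j, P (i, j) <-> Q i j) -> (tri_in P t <-> tri_on Q t).
Proof.
  intros HPQ. unfold tri_in. destruct t as [i j|i j]; simpl; split.
  1, 3: intros H; repeat split; apply HPQ, H; auto.
  all: intros (H1 & H2 & H3) [vi vj] Hv;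
    destruct Hv as [E|[E|[E|[]]]]; inversion E; subst; apply HPQ; auto.
Qed.

Lemma triad_region_params (T : triad) (t : tri) :
  triad_region T t <-> params_region (params_of_triad T) t.
Proof.
  unfold triad_region, params_region, lobes.
  set (p := params_of_triad T).
  assert (E0 : tri_in (hex_pts T) t <-> tri_on (in_hex p) t)
    by (apply tri_in_tri_on; reflexivity).
  assert (E1 : tri_in (lobeA_out T) t <-> tri_on (lobeAo p) t)
    by (apply tri_in_tri_on; reflexivity).
  assert (E2 : tri_in (lobeA_in T) t <-> tri_on (lobeAi p) t)
    by (apply tri_in_tri_on; reflexivity).
  assert (E3 : tri_in (lobeB_in T) t <-> tri_on (lobeBi p) t)
    by (apply tri_in_tri_on; reflexivity).
  assert (E4 : tri_in (lobeB_out T) t <-> tri_on (lobeBo p) t)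
    by (apply tri_in_tri_on; reflexivity).
  assert (E5 : tri_in (lobeC_in T) t <-> tri_on (lobeCi p) t)
    by (apply tri_in_tri_on; reflexivity).
  assert (E6 : tri_in (lobeC_out T) t <-> tri_on (lobeCo p) t)
    by (apply tri_in_tri_on; reflexivity).
  rewrite E0, <- E1, <- E2, <- E3, <- E4, <- E5, <- E6. simpl.
  split.
  - intros [H0 H]. repeat split; auto; intro; apply H; eauto 10.
  - intros (H0 & N1 & N2 & N3 & N4 & N5 & N6). split; auto.
    intros [P [HP Ht]]. destruct HP as [E|[E|[E|[E|[E|[E|[]]]]]]]; subst; auto.
Qed.

(* Parameters with side parameters x, y, z, lobes a, ..., c', A = (u, v),
   f = a' + b' + c' + g, and S-, NE-, NW-depths dS, dE, dW. *)
Definition depth_params (x y z a b c a' b' c' g dS dE dW u v : Z) : params :=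
  {| pu := u; pv := v; pf := a'+b'+c'+g; pa := a; pb := b; pc := c;
     pa' := a'; pb' := b'; pc' := c';
     phW := u - a - b - dW; phE := u + (a'+b'+c'+g) + c + (dS + dE - z);
     phS := v - (a'+b'+c'+g) - b - c - dS;
     phN := v + a + (dE + dW - x); phSW := u + v - (a'+b'+c'+g) - b - (dW + dS - y);
     phNE := u + v + a + c + dE |}.

Ltac lia_with_lobe L :=
  match goal with Hn : ~ tri_on (L _) _ |- _ =>
    let H' := fresh "HU" in pose proof Hn as H'; unfold tri_on in H';
    unfold L, in_up, in_down in H'; simpl in H'; lia end.

Ltac lia_lobes := first [ lia | lia_with_lobe lobeAo | lia_with_lobe lobeAi
  | lia_with_lobe lobeBi | lia_with_lobe lobeBo | lia_with_lobe lobeCi | lia_with_lobe lobeCo ].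

Ltac avoid_lobe L :=
  let H := fresh "HL" in
  intro H; unfold tri_on in H; unfold L, in_up, in_down in H; simpl in H; lia_lobes.

Ltac solve_region :=
  unfold params_region; split; [unfold tri_on, in_hex; simpl; lia_lobes|];
  split; [avoid_lobe lobeAo|]; split; [avoid_lobe lobeAi|]; split; [avoid_lobe lobeBi|];
  split; [avoid_lobe lobeBo|]; split; [avoid_lobe lobeCi|]; avoid_lobe lobeCo.

Ltac destruct_region H :=
  let hx := fresh "hx" in let n1 := fresh "nAo" in let n2 := fresh "nAi" in
  let n3 := fresh "nBi" in let n4 := fresh "nBo" in let n5 := fresh "nCi" in
  let n6 := fresh "nCo" in
  destruct H as [hx [n1 [n2 [n3 [n4 [n5 n6]]]]]]; unfold tri_on, in_hex in hx; simpl in hx.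

Section Base.
Variables (a' b' c' dS dE dW u v : Z).
Hypotheses (Ha' : 0 <= a') (Hb' : 0 <= b') (Hc' : 0 <= c')
  (HdS : 0 <= dS) (HdE : 0 <= dE) (HdW : 0 <= dW).
Let p := depth_params (dE+dW) (dW+dS) (dS+dE) 0 0 0 a' b' c' (dS+dE+dW) dS dE dW u v.

Definition base_c1 i j := i - u < 0 /\ j - v >= - a'.
Definition base_c2 i j := j - v < - (a' + b' + c' + (dS+dE+dW)) /\
  (i - u) + (j - v) < - (a' + b' + c' + (dS+dE+dW)) + b'.
Definition base_c3 i j := (i - u) + (j - v) >= 0 /\ i - u >= (a' + b' + c' + (dS+dE+dW)) - c'.
Definition base_c4 i j := j - v >= - (a' + b' + c' + (dS+dE+dW)) + c' + dE /\
  (i - u) + (j - v) >= b' + dS - (a' + b' + c' + (dS+dE+dW)) + c' + dE.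
Definition base_c5 i j := j - v < - (a' + b' + c' + (dS+dE+dW)) + c' + dE /\ i - u >= b' + dS.
Definition base_right i j :=
  base_c1 i j \/ (~ base_c2 i j /\ ~ base_c3 i j /\ ~ base_c4 i j /\ base_c5 i j).
Definition base_left i j := base_c2 i j \/ (~ base_c3 i j /\ base_c4 i j).

Ltac unfold_base_in H := unfold to_below, to_left, to_right, base_right, base_left,
  base_c1, base_c2, base_c3, base_c4, base_c5 in H.

Lemma base_partner_in i j : params_region p (Up i j) ->
  (to_below base_right base_left i j -> params_region p (Down i (j-1))) /\
  (to_left base_right base_left i j -> params_region p (Down (i-1) j)) /\
  (to_right base_right i j -> params_region p (Down i j)).
Proof.
  intros H. unfold p in *. destruct_region H.
  split; [|split]; intro Ht; unfold_base_in Ht; solve_region.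
Qed.

Lemma base_Down_matched i j : params_region p (Down i j) ->
  (params_region p (Up i (j+1)) /\ to_below base_right base_left i (j+1)) \/
  (params_region p (Up (i+1) j) /\ to_left base_right base_left (i+1) j) \/
  (params_region p (Up i j) /\ to_right base_right i j).
Proof.
  intros H. unfold p in *. destruct_region H.
  destruct (classic (to_right base_right i j)) as [tR|tR];
  destruct (classic (to_left base_right base_left (i+1) j)) as [tL|tL];
  destruct (classic (to_below base_right base_left i (j+1))) as [tV|tV];
  pose proof tR as uR; pose proof tL as uL; pose proof tV as uV;
  unfold_base_in uR; unfold_base_in uL; unfold_base_in uV;
  first [ right; right; split; [solve_region|exact tR]
        | right; left; split; [solve_region|exact tL]
        | left; split; [solve_region|exact tV]
        | exfalso; lia_lobes ].
Qed.

Lemma base_Down_matched_once i j : params_region p (Down i j) ->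
  ~ ((params_region p (Up i (j+1)) /\ to_below base_right base_left i (j+1)) /\
     (params_region p (Up (i+1) j) /\ to_left base_right base_left (i+1) j)) /\
  ~ ((params_region p (Up i (j+1)) /\ to_below base_right base_left i (j+1)) /\
     (params_region p (Up i j) /\ to_right base_right i j)) /\
  ~ ((params_region p (Up (i+1) j) /\ to_left base_right base_left (i+1) j) /\
     (params_region p (Up i j) /\ to_right base_right i j)).
Proof.
  intros H. unfold p in *. destruct_region H.
  split; [|split]; intros [[R1 T1] [R2 T2]]; destruct_region R1; destruct_region R2;
    unfold_base_in T1; unfold_base_in T2; lia_lobes.
Qed.

Lemma base_tileable : tileable (params_region p).
Proof.
  apply (tileable_of_rule _ base_right base_left).
  - exact base_partner_in.
  - exact base_Down_matched.
  - exact base_Down_matched_once.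
Qed.
End Base.

(** * Sufficiency: peeling off strips *)

Definition strip (p q : params) (t : tri) : Prop :=
  params_region p t /\ ~ tri_on (in_hex q) t.

Lemma tileable_of_peel (p q : params) :
  (forall t, tri_on (in_hex q) t -> tri_on (in_hex p) t) ->
  (forall t, tri_on (in_hex q) t ->
     (tri_on (lobeAo p) t <-> tri_on (lobeAo q) t) /\
     (tri_on (lobeAi p) t <-> tri_on (lobeAi q) t) /\
     (tri_on (lobeBi p) t <-> tri_on (lobeBi q) t) /\
     (tri_on (lobeBo p) t <-> tri_on (lobeBo q) t) /\
     (tri_on (lobeCi p) t <-> tri_on (lobeCi q) t) /\
     (tri_on (lobeCo p) t <-> tri_on (lobeCo q) t)) ->
  tileable (strip p q) -> tileable (params_region q) -> tileable (params_region p).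
Proof.
  intros Hsub Hlobes Hstrip Hq.
  assert (HQ : forall t, params_region q t <-> params_region p t /\ tri_on (in_hex q) t).
  { intros t. split.
    - intros Ht. pose proof (proj1 Ht) as Hx. pose proof (Hlobes t Hx).
      unfold params_region in *. split; [|exact Hx]. split; [apply Hsub; exact Hx|]. tauto.
    - intros [Hp Hx]. pose proof (Hlobes t Hx). unfold params_region in *. tauto. }
  apply (tileable_disjoint_union _ (params_region q) (strip p q)); auto.
  - intros t. unfold strip. rewrite HQ. destruct (classic (tri_on (in_hex q) t)); tauto.
  - intros t Ht [_ Hn]. apply HQ in Ht. tauto.
Qed.

(* The equation makes the NE side have length y + a' + b' + c'; the last three quantities
   are the distances of the N, SW and SE sides from the outer lobes at A, B and C. *)
Definition admissible (x y z a b c a' b' c' g dS dE dW : Z) : Prop :=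
  0 <= x /\ 0 <= y /\ 0 <= z /\ 0 <= a /\ 0 <= b /\ 0 <= c /\
  0 <= a' /\ 0 <= b' /\ 0 <= c' /\ 0 <= g /\ 0 <= dS /\ 0 <= dE /\ 0 <= dW /\
  dS + dE + dW = x + y + z - g /\
  0 <= dE + dW - x /\ 0 <= dW + dS - y /\ 0 <= dS + dE - z.

Ltac hex_incl :=
  intros t Hhx; destruct t as [i j|i j]; unfold tri_on, in_hex in *; simpl in *; lia.

Ltac lobes_agree :=
  intros t Hhx; destruct t as [i j|i j]; unfold tri_on, in_hex in Hhx; simpl in Hhx;
  unfold tri_on, lobeAo, lobeAi, lobeBi, lobeBo, lobeCi, lobeCo, in_up, in_down; simpl;
  repeat split; intros; lia.

Ltac destruct_strip H :=
  let R := fresh "Rp" in let N := fresh "nq" in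
  destruct H as [R N]; destruct_region R; unfold tri_on, in_hex in N; simpl in N.

Ltac solve_strip :=
  split; [solve_region|
    let H := fresh "Hq" in intro H; unfold tri_on, in_hex in H; simpl in H; lia_lobes].

Ltac pick_match := first [ right; right; split; [solve_strip|assumption]
                         | right; left; split; [solve_strip|assumption]
                         | left; split; [solve_strip|assumption]
                         | exfalso; lia_lobes ].

Ltac case_in_hex p t := let h := fresh "hh" in
  destruct (classic (tri_on (in_hex p) t)) as [h|h]; unfold tri_on, in_hex in h; simpl in h.

Ltac pick_match_cases p i j :=
  first [ pick_match
        | case_in_hex p (Up i j); pick_match
        | case_in_hex p (Up (i+1) j); pick_match
        | case_in_hex p (Up i (j+1)); pick_match
        | case_in_hex p (Up i j); case_in_hex p (Up (i+1) j); case_in_hex p (Up i (j+1));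
          pick_match ].

Ltac peel onRight onLeft :=
  match goal with |- tileable (params_region ?q) -> tileable (params_region ?p) =>
  apply (tileable_of_peel p q); [hex_incl | lobes_agree |];
  apply (tileable_of_rule _ onRight onLeft);
  [ intros i j H; destruct_strip H; unfold to_below, to_left, to_right; cbv beta;
    split; [|split]; intro Ht; solve_strip
  | intros i j H; destruct_strip H;
    destruct (classic (to_right onRight i j)) as [tR|tR];
    destruct (classic (to_left onRight onLeft (i+1) j)) as [tL|tL];
    destruct (classic (to_below onRight onLeft i (j+1))) as [tV|tV];
    pose proof tR as uR; pose proof tL as uL; pose proof tV as uV;
    unfold to_below, to_left, to_right in uR, uL, uV; cbv beta in uR, uL, uV;
    pick_match_cases p i j
  | intros i j H; destruct_strip H;
    split; [|split]; intros [[R1 T1] [R2 T2]]; destruct_strip R1; destruct_strip R2;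
    unfold to_below, to_left, to_right in *; cbv beta in *; lia_lobes ]
  end.

Ltac destruct_admissible H :=
  destruct H as (Hx & Hy & Hz & Ha & Hb & Hc & Ha' & Hb' & Hc' & Hg & HdS & HdE & HdW &
                 Hsum & Hsx & Hsy & Hsz).

Section Peeling.
Variables (x y z a b c a' b' c' g dS dE dW u v : Z).
Hypothesis Hadm : admissible x y z a b c a' b' c' g dS dE dW.
Let p := depth_params x y z a b c a' b' c' g dS dE dW u v.

Lemma tileable_grow_x_dW : 1 <= x -> 1 <= dW -> 1 <= dW + dS - y ->
  tileable (params_region (depth_params (x-1) y z a b c a' b' c' g dS dE (dW-1) u v)) ->
  tileable (params_region p).
Proof.
  intros H1 H2 H3. destruct_admissible Hadm. unfold p.
  peel (fun i j : Z => i = u - a - b - dW)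
       (fun i j : Z => i + j = u + v - (a'+b'+c'+g) - b - (dW + dS - y)).
Qed.

Lemma tileable_grow_x_dE : 1 <= x -> 1 <= dE -> 1 <= dS + dE - z ->
  tileable (params_region (depth_params (x-1) y z a b c a' b' c' g dS (dE-1) dW u v)) ->
  tileable (params_region p).
Proof.
  intros H1 H2 H3. destruct_admissible Hadm. unfold p.
  peel (fun i j : Z => i = u + (a'+b'+c'+g) + c + (dS + dE - z) - 1 /\
                       i + j <> u + v + a + c + dE - 1)
       (fun i j : Z => i + j = u + v + a + c + dE - 1).
Qed.

Lemma tileable_grow_y_dW : 1 <= y -> 1 <= dW -> 1 <= dE + dW - x ->
  tileable (params_region (depth_params x (y-1) z a b c a' b' c' g dS dE (dW-1) u v)) ->
  tileable (params_region p).
Proof.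
  intros H1 H2 H3. destruct_admissible Hadm. unfold p.
  peel (fun i j : Z => False)
       (fun i j : Z => j = v + a + (dE + dW - x) - 1 /\ i <> u - a - b - dW).
Qed.

Lemma tileable_grow_y_dS : 1 <= y -> 1 <= dS -> 1 <= dS + dE - z ->
  tileable (params_region (depth_params x (y-1) z a b c a' b' c' g (dS-1) dE dW u v)) ->
  tileable (params_region p).
Proof.
  intros H1 H2 H3. destruct_admissible Hadm. unfold p.
  peel (fun i j : Z => False)
       (fun i j : Z => j = v - (a'+b'+c'+g) - b - c - dS).
Qed.

Lemma tileable_grow_z_dE : 1 <= z -> 1 <= dE -> 1 <= dE + dW - x ->
  tileable (params_region (depth_params x y (z-1) a b c a' b' c' g dS (dE-1) dW u v)) ->
  tileable (params_region p).
Proof.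
  intros H1 H2 H3. destruct_admissible Hadm. unfold p.
  peel (fun i j : Z => j = v + a + (dE + dW - x) - 1 /\ i + j <> u + v + a + c + dE - 1)
       (fun i j : Z => False).
Qed.

Lemma tileable_grow_z_dS : 1 <= z -> 1 <= dS -> 1 <= dW + dS - y ->
  tileable (params_region (depth_params x y (z-1) a b c a' b' c' g (dS-1) dE dW u v)) ->
  tileable (params_region p).
Proof.
  intros H1 H2 H3. destruct_admissible Hadm. unfold p.
  peel (fun i j : Z => j = v - (a'+b'+c'+g) - b - c - dS)
       (fun i j : Z => False).
Qed.

Lemma tileable_grow_a : 1 <= a -> dE + dW - x = 0 ->
  tileable (params_region (depth_params x y z (a-1) b c a' b' c' g dS dE dW u v)) ->
  tileable (params_region p).
Proof.
  intros H1 H2. destruct_admissible Hadm. unfold p.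
  peel (fun i j : Z => j = v + a + (dE + dW - x) - 1 /\ i <> u - a - b - dW /\
         i + j <> u + v + a + c + dE - 1 /\ i >= u)
       (fun i j : Z => j = v + a + (dE + dW - x) - 1 /\ i <> u - a - b - dW /\
         i + j <> u + v + a + c + dE - 1 /\ i < u).
Qed.

Lemma tileable_grow_b : 1 <= b -> dW + dS - y = 0 ->
  tileable (params_region (depth_params x y z a (b-1) c a' b' c' g dS dE dW u v)) ->
  tileable (params_region p).
Proof.
  intros H1 H2. destruct_admissible Hadm. unfold p.
  peel (fun i j : Z => i = u - a - b - dW \/ j = v - (a'+b'+c'+g) - b - c - dS)
       (fun i j : Z => i + j = u + v - (a'+b'+c'+g) - b - (dW + dS - y) /\ j >= v - (a'+b'+c'+g)).
Qed.

Lemma tileable_grow_c : 1 <= c -> dS + dE - z = 0 ->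
  tileable (params_region (depth_params x y z a b (c-1) a' b' c' g dS dE dW u v)) ->
  tileable (params_region p).
Proof.
  intros H1 H2. destruct_admissible Hadm. unfold p.
  peel (fun i j : Z => i = u + (a'+b'+c'+g) + c + (dS + dE - z) - 1 /\ j >= v - (a'+b'+c'+g) /\
         i + j <> u + v + a + c + dE - 1 /\ j <> v - (a'+b'+c'+g) - b - c - dS)
       (fun i j : Z => i + j = u + v + a + c + dE - 1 \/ j = v - (a'+b'+c'+g) - b - c - dS).
Qed.

End Peeling.

Lemma tileable_of_zero_clearances x y z a' b' c' g dS dE dW u v :
  admissible x y z 0 0 0 a' b' c' g dS dE dW ->
  dE + dW - x = 0 -> dW + dS - y = 0 -> dS + dE - z = 0 ->
  tileable (params_region (depth_params x y z 0 0 0 a' b' c' g dS dE dW u v)).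
Proof.
  intros Hadm Sx Sy Sz. destruct_admissible Hadm.
  replace x with (dE + dW) by lia. replace y with (dW + dS) by lia.
  replace z with (dS + dE) by lia. replace g with (dS + dE + dW) by lia.
  apply base_tileable; assumption.
Qed.

Ltac grow_with L IH :=
  apply L; [assumption | lia .. | apply IH; [unfold admissible in *; lia | lia]].

Lemma depth_params_tileable_le (n : nat) : forall x y z a b c a' b' c' g dS dE dW u v,
  admissible x y z a b c a' b' c' g dS dE dW ->
  (Z.to_nat (x + y + z + a + b + c) <= n)%nat ->
  tileable (params_region (depth_params x y z a b c a' b' c' g dS dE dW u v)).
Proof.
  induction n as [|n IH]; intros x y z a b c a' b' c' g dS dE dW u v Hadm Hn;
    pose proof Hadm as Hadm'; destruct_admissible Hadm'.
  - assert (a = 0 /\ b = 0 /\ c = 0) as (-> & -> & ->) by lia.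
    apply tileable_of_zero_clearances; [assumption | lia ..].
  - destruct (classic (1 <= x /\ 1 <= dW /\ 1 <= dW + dS - y)) as [?|C1].
    { grow_with tileable_grow_x_dW IH. }
    destruct (classic (1 <= x /\ 1 <= dE /\ 1 <= dS + dE - z)) as [?|C2].
    { grow_with tileable_grow_x_dE IH. }
    destruct (classic (1 <= y /\ 1 <= dW /\ 1 <= dE + dW - x)) as [?|C3].
    { grow_with tileable_grow_y_dW IH. }
    destruct (classic (1 <= y /\ 1 <= dS /\ 1 <= dS + dE - z)) as [?|C4].
    { grow_with tileable_grow_y_dS IH. }
    destruct (classic (1 <= z /\ 1 <= dE /\ 1 <= dE + dW - x)) as [?|C5].
    { grow_with tileable_grow_z_dE IH. }
    destruct (classic (1 <= z /\ 1 <= dS /\ 1 <= dW + dS - y)) as [?|C6].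
    { grow_with tileable_grow_z_dS IH. }
    assert (Sx : dE + dW - x = 0) by lia.
    assert (Sy : dW + dS - y = 0) by lia.
    assert (Sz : dS + dE - z = 0) by lia.
    destruct (classic (1 <= a)) as [?|C7]; [grow_with tileable_grow_a IH|].
    destruct (classic (1 <= b)) as [?|C8]; [grow_with tileable_grow_b IH|].
    destruct (classic (1 <= c)) as [?|C9]; [grow_with tileable_grow_c IH|].
    assert (a = 0 /\ b = 0 /\ c = 0) as (-> & -> & ->) by lia.
    apply tileable_of_zero_clearances; assumption.
Qed.

Lemma is_triad_Z (T : triad) : is_triad T ->
  (tf T >= ta' T + tb' T + tc' T)%nat /\
  hNE T - hN T - hW T = Z.of_nat (tx T) + Z.of_nat (ta T) + Z.of_nat (tb T) + Z.of_nat (tc T) /\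
  hN T + hE T - hNE T = Z.of_nat (ty T) + Z.of_nat (ta' T) + Z.of_nat (tb' T) + Z.of_nat (tc' T) /\
  hNE T - hE T - hS T = Z.of_nat (tz T) + Z.of_nat (ta T) + Z.of_nat (tb T) + Z.of_nat (tc T) /\
  hE T - hSW T + hS T = Z.of_nat (tx T) + Z.of_nat (ta' T) + Z.of_nat (tb' T) + Z.of_nat (tc' T) /\
  hSW T - hW T - hS T = Z.of_nat (ty T) + Z.of_nat (ta T) + Z.of_nat (tb T) + Z.of_nat (tc T) /\
  hN T - hSW T + hW T = Z.of_nat (tz T) + Z.of_nat (ta' T) + Z.of_nat (tb' T) + Z.of_nat (tc' T) /\
  (forall P, In P (lobes T) -> forall v, P v -> hex_pts T v).
Proof.
  unfold is_triad. cbv zeta. intros (H0 & H1 & H2 & H3 & H4 & H5 & H6 & H7).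
  rewrite !Nat2Z.inj_add in *. split; [exact H0|]. repeat (split; [lia|]). exact H7.
Qed.

Lemma triad_clearances (T : triad) : is_triad T ->
  snd (tA T) + Z.of_nat (ta T) <= hN T /\
  hSW T <= fst (tA T) - Z.of_nat (tb T) + (snd (tA T) - Z.of_nat (tf T)) /\
  fst (tA T) + Z.of_nat (tf T) + Z.of_nat (tc T) <= hE T.
Proof.
  intros HT. destruct (is_triad_Z T HT) as (_ & _ & _ & _ & _ & _ & _ & Hlobes).
  split; [|split].
  - assert (Hm : hex_pts T (fst (tA T) - Z.of_nat (ta T), snd (tA T) + Z.of_nat (ta T)))
      by (apply (Hlobes (lobeA_out T)); [simpl; tauto|];
          unfold lobeA_out, down_pts, ptA; simpl; lia).
    unfold hex_pts in Hm. simpl in Hm. lia.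
  - assert (Hm : hex_pts T (fst (tA T) - Z.of_nat (tb T), snd (tA T) - Z.of_nat (tf T)))
      by (apply (Hlobes (lobeB_out T)); [simpl; tauto|];
          unfold lobeB_out, down_pts, ptB; simpl; lia).
    unfold hex_pts in Hm. simpl in Hm. lia.
  - assert (Hm : hex_pts T (fst (tA T) + Z.of_nat (tf T) + Z.of_nat (tc T),
                             snd (tA T) - Z.of_nat (tf T)))
      by (apply (Hlobes (lobeC_out T)); [simpl; tauto|];
          unfold lobeC_out, down_pts, ptC; simpl; lia).
    unfold hex_pts in Hm. simpl in Hm. lia.
Qed.

Lemma tileable_of_depths (T : triad) : is_triad T ->
  0 <= S_depth T -> 0 <= NE_depth T -> 0 <= NW_depth T -> tileable (triad_region T).
Proof.
  intros HT HS HE HW.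
  pose proof (triad_clearances T HT) as Hcl.
  destruct (is_triad_Z T HT) as (Hf & E1 & E2 & E3 & E4 & E5 & E6 & _).
  unfold S_depth, NE_depth, NW_depth, ptA, ptB in *. simpl in *.
  set (u := fst (tA T)) in *. set (v := snd (tA T)) in *.
  set (x := Z.of_nat (tx T)) in *. set (y := Z.of_nat (ty T)) in *. set (z := Z.of_nat (tz T)) in *.
  set (a := Z.of_nat (ta T)) in *. set (b := Z.of_nat (tb T)) in *. set (c := Z.of_nat (tc T)) in *.
  set (a' := Z.of_nat (ta' T)) in *. set (b' := Z.of_nat (tb' T)) in *.
  set (c' := Z.of_nat (tc' T)) in *. set (f := Z.of_nat (tf T)) in *.
  assert (Hg : a' + b' + c' <= f) by (subst a' b' c' f; lia).
  assert (Hp : params_of_triad T = depth_params x y z a b c a' b' c' (f - a' - b' - c')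
            (v - f - hS T - b - c) (hNE T - (u + v) - a - c) (u - hW T - a - b) u v).
  { unfold params_of_triad, depth_params. fold u v a b c a' b' c' f. f_equal; lia. }
  apply (tileable_ext (params_region (params_of_triad T))).
  { intros t. rewrite triad_region_params. tauto. }
  rewrite Hp. apply (depth_params_tileable_le (Z.to_nat (x + y + z + a + b + c))); [|lia].
  unfold admissible. subst x y z a b c a' b' c' f. lia.
Qed.

(** * Necessity: counting triangles row by row *)

Definition holds (P : Prop) : bool := if excluded_middle_informative P then true else false.

Lemma holds_true (P : Prop) : holds P = true <-> P.
Proof. unfold holds. destruct (excluded_middle_informative P); split; auto; discriminate. Qed.

Lemma holds_false (P : Prop) : holds P = false <-> ~ P.
Proof.
  unfold holds. destruct (excluded_middle_informative P); split; auto; try discriminate; tauto.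
Qed.

Lemma holds_iff (P Q : Prop) : (P <-> Q) -> holds P = holds Q.
Proof.
  intros H. unfold holds.
  destruct (excluded_middle_informative P), (excluded_middle_informative Q); tauto.
Qed.

Ltac case_holds E P :=
  destruct (holds P) eqn:E; [rewrite holds_true in E | rewrite holds_false in E].

Fixpoint zrange (lo : Z) (n : nat) : list Z :=
  match n with O => [] | S n' => lo :: zrange (lo + 1) n' end.

Lemma in_zrange lo n i : In i (zrange lo n) <-> lo <= i < lo + Z.of_nat n.
Proof. revert lo. induction n as [|n IH]; intros lo; simpl; [lia|]. rewrite IH. lia. Qed.

Lemma NoDup_zrange lo n : NoDup (zrange lo n).
Proof.
  revert lo. induction n as [|n IH]; intros lo; simpl; constructor; auto.
  rewrite in_zrange. lia.
Qed.

Lemma length_zrange lo n : length (zrange lo n) = n.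
Proof. revert lo; induction n; simpl; auto. Qed.

Definition zcount (P : Z -> Prop) (lo : Z) (n : nat) : nat :=
  length (filter (fun i => holds (P i)) (zrange lo n)).

Lemma zcount_S P lo n :
  zcount P lo (S n) = ((if holds (P lo) then 1 else 0) + zcount P (lo + 1) n)%nat.
Proof. unfold zcount. simpl. destruct (holds (P lo)); reflexivity. Qed.

Lemma zcount_ext (P Q : Z -> Prop) lo n :
  (forall i, lo <= i < lo + Z.of_nat n -> (P i <-> Q i)) -> zcount P lo n = zcount Q lo n.
Proof.
  revert lo. induction n as [|n IH]; intros lo H; [reflexivity|].
  rewrite !zcount_S, (IH (lo+1)) by (intros i Hi; apply H; lia).
  rewrite (holds_iff (P lo) (Q lo)) by (apply H; lia). reflexivity.
Qed.

Lemma zcount_split (P Q : Z -> Prop) lo n :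
  zcount P lo n = (zcount (fun i => P i /\ Q i) lo n + zcount (fun i => P i /\ ~ Q i) lo n)%nat.
Proof.
  revert lo. induction n as [|n IH]; intros lo; [reflexivity|].
  rewrite !zcount_S, (IH (lo+1)).
  case_holds E1 (P lo); case_holds E2 (P lo /\ Q lo); case_holds E3 (P lo /\ ~ Q lo);
    try lia; tauto.
Qed.

Lemma zcount_remove2 (H B C : Z -> Prop) lo n :
  (forall i, B i -> H i) -> (forall i, C i -> H i /\ ~ B i) ->
  Z.of_nat (zcount (fun i => (H i /\ ~ B i) /\ ~ C i) lo n) =
  Z.of_nat (zcount H lo n) - Z.of_nat (zcount B lo n) - Z.of_nat (zcount C lo n).
Proof.
  intros HB HC.
  rewrite (zcount_split H B), (zcount_split (fun i => H i /\ ~ B i) C).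
  rewrite (zcount_ext (fun i => H i /\ B i) B) by (intros i _; specialize (HB i); tauto).
  rewrite (zcount_ext (fun i => (H i /\ ~ B i) /\ C i) C) by (intros i _; specialize (HC i); tauto).
  lia.
Qed.

Lemma zcount_interval (al be lo : Z) (n : nat) :
  Z.of_nat (zcount (fun i => al <= i <= be) lo n) =
  Z.max 0 (Z.min be (lo + Z.of_nat n - 1) - Z.max al lo + 1).
Proof.
  revert lo. induction n as [|n IH]; intros lo; [unfold zcount; simpl; lia|].
  rewrite zcount_S, Nat2Z.inj_add, IH, Nat2Z.inj_succ.
  case_holds E (al <= lo <= be); cbn [Z.of_nat]; lia.
Qed.

Lemma zcount_interval_widen al be al' be' lo n : al - 1 <= al' -> be' <= be ->
  Z.of_nat (zcount (fun i => al' <= i <= be') lo n) <=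
  Z.of_nat (zcount (fun i => al <= i <= be) lo n) + 1.
Proof. intros. rewrite !zcount_interval. lia. Qed.

Lemma zcount_interval_extend al be lo n : lo <= al - 1 -> be <= lo + Z.of_nat n - 1 ->
  Z.of_nat (zcount (fun i => al - 1 <= i <= be) lo n) =
  Z.of_nat (zcount (fun i => al <= i <= be) lo n) + (if holds (al - 1 <= be) then 1 else 0).
Proof. intros. rewrite !zcount_interval. case_holds E (al - 1 <= be); lia. Qed.

Definition zsum (f : Z -> Z) (l : list Z) : Z := fold_right (fun k acc => f k + acc) 0 l.

Lemma zsum_le f g l : (forall k, In k l -> f k <= g k) -> zsum f l <= zsum g l.
Proof.
  induction l as [|k l IH]; simpl; intros H; [lia|].
  specialize (IH (fun k' Hk => H k' (or_intror Hk))). specialize (H k (or_introl eq_refl)). lia.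
Qed.

Lemma zsum_affine f g h l :
  zsum (fun k => f k + 1 - g k - h k) l = zsum f l + Z.of_nat (length l) - zsum g l - zsum h l.
Proof. induction l as [|k l IH]; simpl; lia. Qed.

Lemma zsum_indicator (P : Z -> Prop) lo n :
  zsum (fun k => if holds (P k) then 1 else 0) (zrange lo n) = Z.of_nat (zcount P lo n).
Proof.
  revert lo. induction n as [|n IH]; intros lo; [reflexivity|].
  rewrite zcount_S, Nat2Z.inj_add. simpl. rewrite <- IH. destruct (holds (P lo)); simpl; lia.
Qed.

Lemma list_sum_zsum (g : Z -> nat) l :
  Z.of_nat (list_sum (map g l)) = zsum (fun k => Z.of_nat (g k)) l.
Proof. induction l as [|k l IH]; simpl; [reflexivity|]. rewrite Nat2Z.inj_add, IH. reflexivity. Qed.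

Section TilingCount.
Variables (R : region) (L : tri * tri -> Prop).
Hypothesis HL : lozenge_tiling R L.

Lemma tiling_partner_exists :
  exists partner : tri -> tri, forall t, R t -> L (t, partner t) \/ L (partner t, t).
Proof.
  assert (H : forall t, exists d, R t -> L (t, d) \/ L (d, t)).
  { intros t. destruct (classic (R t)) as [Ht|Ht]; [|exists t; tauto].
    destruct (proj2 HL t Ht) as [[p1 p2] [[Hp Hs] _]].
    simpl in Hs. destruct Hs as [->| ->]; eauto. }
  exists (fun t => proj1_sig (constructive_indefinite_description _ (H t))).
  intros t Ht. destruct (constructive_indefinite_description _ (H t)) as [d Hd]. simpl. auto.
Qed.

Variable partner : tri -> tri.
Hypothesis Hpartner : forall t, R t -> L (t, partner t) \/ L (partner t, t).

Lemma partner_Up i k : R (Up i k) -> R (partner (Up i k)) /\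
  (partner (Up i k) = Down i k \/ partner (Up i k) = Down (i-1) k \/
   partner (Up i k) = Down i (k-1)).
Proof.
  intros Hu. destruct (Hpartner _ Hu) as [Hp|Hp];
    destruct (proj1 HL _ Hp) as (Hadj & H1 & H2); simpl in *.
  - split; auto. apply adjacent_Up_cases; auto.
  - split; auto. apply adjacent_Up_cases, adjacent_sym; auto.
Qed.

Lemma partner_Up_inj i1 k1 i2 k2 : R (Up i1 k1) -> R (Up i2 k2) ->
  partner (Up i1 k1) = partner (Up i2 k2) -> Up i1 k1 = Up i2 k2.
Proof.
  intros H1 H2 E.
  destruct (partner_Up i1 k1 H1) as [Hd Hdown].
  destruct (proj2 HL _ Hd) as [p [_ Huniq]].
  assert (Hq : forall i k, R (Up i k) -> exists q, L q /\
     (partner (Up i k) = fst q \/ partner (Up i k) = snd q) /\ (Up i k = fst q \/ Up i k = snd q)).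
  { intros i k Hu. destruct (Hpartner _ Hu) as [Hp|Hp]; eexists; split; try exact Hp;
    simpl; auto. }
  destruct (Hq i1 k1 H1) as [q1 [Lq1 [Dq1 Uq1]]]. destruct (Hq i2 k2 H2) as [q2 [Lq2 [Dq2 Uq2]]].
  rewrite <- E in Dq2.
  assert (q1 = q2) as <- by (rewrite <- (Huniq q1), <- (Huniq q2); auto).
  destruct q1 as [t1 t2]. simpl in *.
  destruct Hdown as [Ed|[Ed|Ed]]; rewrite Ed in *;
  destruct Uq1 as [E1|E1]; destruct Uq2 as [E2|E2]; destruct Dq1 as [E3|E3]; congruence.
Qed.
End TilingCount.

Definition rows_Up (R : region) (I0 : Z) (W : nat) (rows : list Z) : list tri :=
  flat_map (fun k => map (fun i => Up i k)
                         (filter (fun i => holds (R (Up i k))) (zrange I0 W))) rows.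
Definition rows_Down (R : region) (I0 : Z) (W : nat) (rows : list Z) : list tri :=
  flat_map (fun k => map (fun i => Down i k)
                         (filter (fun i => holds (R (Down i k))) (zrange I0 W))) rows.

Lemma in_rows_Up R I0 W rows t : In t (rows_Up R I0 W rows) <->
  exists i k, t = Up i k /\ In k rows /\ I0 <= i < I0 + Z.of_nat W /\ R (Up i k).
Proof.
  unfold rows_Up. rewrite in_flat_map. split.
  - intros [k [Hk Ht]]. apply in_map_iff in Ht. destruct Ht as [i [E Hi]].
    apply filter_In in Hi. destruct Hi as [Hi Hd]. rewrite holds_true in Hd. apply in_zrange in Hi.
    exists i, k. auto.
  - intros [i [k [E [Hk [Hi HR]]]]]. exists k. split; auto. apply in_map_iff. exists i. split; auto.
    apply filter_In. split; [apply in_zrange; auto|]. rewrite holds_true. auto.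
Qed.

Lemma in_rows_Down R I0 W rows t : In t (rows_Down R I0 W rows) <->
  exists i k, t = Down i k /\ In k rows /\ I0 <= i < I0 + Z.of_nat W /\ R (Down i k).
Proof.
  unfold rows_Down. rewrite in_flat_map. split.
  - intros [k [Hk Ht]]. apply in_map_iff in Ht. destruct Ht as [i [E Hi]].
    apply filter_In in Hi. destruct Hi as [Hi Hd]. rewrite holds_true in Hd. apply in_zrange in Hi.
    exists i, k. auto.
  - intros [i [k [E [Hk [Hi HR]]]]]. exists k. split; auto. apply in_map_iff. exists i. split; auto.
    apply filter_In. split; [apply in_zrange; auto|]. rewrite holds_true. auto.
Qed.

Lemma NoDup_rows_Up R I0 W lo n : NoDup (rows_Up R I0 W (zrange lo n)).
Proof.
  revert lo. induction n as [|n IH]; intros lo; [constructor|].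
  unfold rows_Up. simpl. fold (rows_Up R I0 W (zrange (lo+1) n)). apply NoDup_app.
  - apply Injective_map_NoDup; [intros x y E; congruence|]. apply NoDup_filter, NoDup_zrange.
  - apply IH.
  - intros t Ht Ht'. apply in_map_iff in Ht. destruct Ht as [i [<- _]].
    apply in_rows_Up in Ht'. destruct Ht' as [i' [k [E [Hk _]]]]. injection E as -> ->.
    apply in_zrange in Hk. lia.
Qed.

Lemma length_rows_Up R I0 W rows :
  length (rows_Up R I0 W rows) = list_sum (map (fun k => zcount (fun i => R (Up i k)) I0 W) rows).
Proof.
  unfold rows_Up. rewrite length_flat_map. f_equal. apply map_ext. intros k.
  rewrite length_map. reflexivity.
Qed.

Lemma length_rows_Down R I0 W rows :
  length (rows_Down R I0 W rows) =
  list_sum (map (fun k => zcount (fun i => R (Down i k)) I0 W) rows).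
Proof.
  unfold rows_Down. rewrite length_flat_map. f_equal. apply map_ext. intros k.
  rewrite length_map. reflexivity.
Qed.

(* Matching each up triangle with its partner, which lies in the same row or the row below,
   maps the up triangles of rows [r0, r0 + nr) injectively to down triangles of the same rows. *)
Lemma tiling_Up_le_Down (R : region) (I0 : Z) (W : nat) (r0 : Z) (nr : nat) :
  tileable R ->
  (forall i k, R (Down i k) -> I0 <= i < I0 + Z.of_nat W) ->
  (forall i k, R (Down i k) -> r0 <= k) ->
  (list_sum (map (fun k => zcount (fun i => R (Up i k)) I0 W) (zrange r0 nr)) <=
   list_sum (map (fun k => zcount (fun i => R (Down i k)) I0 W) (zrange r0 nr)))%nat.
Proof.
  intros [L HL] Hbox Hbot.
  destruct (tiling_partner_exists R L HL) as [partner Hpartner].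
  rewrite <- length_rows_Up, <- length_rows_Down, <- (length_map partner).
  apply NoDup_incl_length.
  - apply NoDup_map_NoDup_ForallPairs; [|apply NoDup_rows_Up].
    intros t1 t2 Ht1 Ht2 E. apply in_rows_Up in Ht1, Ht2.
    destruct Ht1 as [i1 [k1 [-> [_ [_ H1]]]]]. destruct Ht2 as [i2 [k2 [-> [_ [_ H2]]]]].
    apply (partner_Up_inj R L HL partner Hpartner); auto.
  - intros d Hd. apply in_map_iff in Hd. destruct Hd as [t [<- Ht]].
    apply in_rows_Up in Ht. destruct Ht as [i [k [-> [Hk [Hi HR]]]]].
    destruct (partner_Up R L HL partner Hpartner i k HR) as [Hd Hcases].
    apply in_rows_Down. apply in_zrange in Hk.
    destruct Hcases as [E|[E|E]]; rewrite E in *.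
    + exists i, k. repeat split; [apply in_zrange; lia|apply (Hbox _ _ Hd)..|exact Hd].
    + exists (i-1), k. repeat split; [apply in_zrange; lia|apply (Hbox _ _ Hd)..|exact Hd].
    + exists i, (k-1). specialize (Hbot _ _ Hd).
      repeat split; [apply in_zrange; lia|apply (Hbox _ _ Hd)..|exact Hd].
Qed.

Definition well_formed (p : params) : Prop :=
  let u := pu p in let v := pv p in let f := pf p in
  let a := pa p in let b := pb p in let c := pc p in
  let a' := pa' p in let b' := pb' p in let c' := pc' p in
  0 <= a /\ 0 <= b /\ 0 <= c /\ 0 <= a' /\ 0 <= b' /\ 0 <= c' /\ a' + b' + c' <= f /\
  in_hex p (u - a) (v + a) /\ in_hex p u (v + a) /\ in_hex p u v /\
  in_hex p u (v - a') /\ in_hex p (u + a') (v - a') /\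
  in_hex p u (v - f) /\ in_hex p (u + b') (v - f) /\ in_hex p u (v - f + b') /\
  in_hex p (u - b) (v - f) /\ in_hex p u (v - f - b) /\
  in_hex p (u + f - c') (v - f) /\ in_hex p (u + f) (v - f) /\ in_hex p (u + f - c') (v - f + c') /\
  in_hex p (u + f + c) (v - f) /\ in_hex p (u + f + c) (v - f - c).

Section RowCount.
Variable p : params.
Hypothesis Hp : well_formed p.

Ltac destruct_well_formed :=
  destruct Hp as (Ha & Hb & Hc & Ha' & Hb' & Hc' & Hf & Hcor); unfold in_hex in Hcor; simpl in Hcor.

Lemma row_Up_region k i : phS p <= k < pv p - pf p ->
  params_region p (Up i k) <->
  (Z.max (phW p) (phSW p - k) <= i <= Z.min (phE p - 1) (phNE p - k - 1) /\
   ~ (pu p - pb p + pv p - pf p - k <= i <= pu p - 1)) /\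
  ~ (pu p + pv p - k <= i <= pu p + pf p + pc p - 1).
Proof.
  intros Hk. destruct_well_formed. unfold params_region. split.
  - intros (H0 & H1 & H2 & H3 & H4 & H5 & H6). unfold tri_on, in_hex in H0; simpl in H0.
    split; [split|].
    + clear -H0 Hk. lia.
    + intro HB. apply H4. unfold tri_on, lobeBo, in_down. simpl. lia.
    + intro HC. apply H6. unfold tri_on, lobeCo, in_down. simpl. lia.
  - intros [[H0 H1] H2]. split; [unfold tri_on, in_hex; simpl; lia|].
    repeat split; intro HL;
      unfold tri_on, lobeAo, lobeAi, lobeBi, lobeBo, lobeCi, lobeCo, in_up, in_down in HL;
      simpl in HL;
      try (clear -HL Hk Ha Ha' Hb Hc Hb' Hc' Hf; lia); try (apply H1; lia); try (apply H2; lia).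
Qed.

Lemma row_Down_region k i : phS p <= k < pv p - pf p ->
  params_region p (Down i k) <->
  (Z.max (phW p) (phSW p - k - 1) <= i <= Z.min (phE p - 1) (phNE p - k - 2) /\
   ~ (pu p - pb p + pv p - pf p - k - 1 <= i <= pu p - 1)) /\
  ~ (pu p + pv p - k - 1 <= i <= pu p + pf p + pc p - 1).
Proof.
  intros Hk. destruct_well_formed. unfold params_region. split.
  - intros (H0 & H1 & H2 & H3 & H4 & H5 & H6). unfold tri_on, in_hex in H0; simpl in H0.
    split; [split|].
    + clear -H0 Hk. lia.
    + intro HB. apply H4. unfold tri_on, lobeBo, in_down. simpl. lia.
    + intro HC. apply H6. unfold tri_on, lobeCo, in_down. simpl. lia.
  - intros [[H0 H1] H2]. split; [unfold tri_on, in_hex; simpl; lia|].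
    repeat split; intro HL;
      unfold tri_on, lobeAo, lobeAi, lobeBi, lobeBo, lobeCi, lobeCo, in_up, in_down in HL;
      simpl in HL;
      try (clear -HL Hk Ha Ha' Hb Hc Hb' Hc' Hf; lia); try (apply H1; lia); try (apply H2; lia).
Qed.

(* Below the focal edge BC a row of the hexagon is an interval, with at most one more down
   than up triangle; a row of the outer lobe at B or C removes one more down than up
   triangle. *)
Lemma row_Down_le_Up k : phS p <= k < pv p - pf p ->
  Z.of_nat (zcount (fun i => params_region p (Down i k)) (phW p) (Z.to_nat (phE p - phW p))) <=
  Z.of_nat (zcount (fun i => params_region p (Up i k)) (phW p) (Z.to_nat (phE p - phW p))) + 1
   - (if holds (pv p - pf p - pb p <= k) then 1 else 0)
   - (if holds (pv p - pf p - pc p <= k) then 1 else 0).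
Proof.
  intros Hk.
  rewrite (zcount_ext _ _ _ _ (fun i _ => row_Up_region k i Hk)).
  rewrite (zcount_ext _ _ _ _ (fun i _ => row_Down_region k i Hk)).
  destruct_well_formed.
  pose proof (zcount_remove2
    (fun i => Z.max (phW p) (phSW p - k) <= i <= Z.min (phE p - 1) (phNE p - k - 1))
    (fun i => pu p - pb p + pv p - pf p - k <= i <= pu p - 1)
    (fun i => pu p + pv p - k <= i <= pu p + pf p + pc p - 1)
    (phW p) (Z.to_nat (phE p - phW p))) as HU.
  pose proof (zcount_remove2
    (fun i => Z.max (phW p) (phSW p - k - 1) <= i <= Z.min (phE p - 1) (phNE p - k - 2))
    (fun i => pu p - pb p + pv p - pf p - k - 1 <= i <= pu p - 1)
    (fun i => pu p + pv p - k - 1 <= i <= pu p + pf p + pc p - 1)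
    (phW p) (Z.to_nat (phE p - phW p))) as HD.
  cbv beta in HU, HD. rewrite HU, HD by (intros; lia).
  assert (Hrow := zcount_interval_widen
    (Z.max (phW p) (phSW p - k)) (Z.min (phE p - 1) (phNE p - k - 1))
    (Z.max (phW p) (phSW p - k - 1)) (Z.min (phE p - 1) (phNE p - k - 2))
    (phW p) (Z.to_nat (phE p - phW p)) ltac:(lia) ltac:(lia)).
  rewrite (zcount_interval_extend (pu p - pb p + pv p - pf p - k)) by lia.
  rewrite (holds_iff (pu p - pb p + pv p - pf p - k - 1 <= pu p - 1) (pv p - pf p - pb p <= k))
    by lia.
  rewrite (zcount_interval_extend (pu p + pv p - k)) by lia.
  rewrite (holds_iff (pu p + pv p - k - 1 <= pu p + pf p + pc p - 1) (pv p - pf p - pc p <= k))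
    by lia.
  clear -Hrow. lia.
Qed.

Lemma S_clearance_nonneg : tileable (params_region p) ->
  0 <= pv p - pf p - phS p - pb p - pc p.
Proof.
  intros HT. pose proof Hp as (Ha & Hb & Hc & Ha' & Hb' & Hc' & Hf & Hcor).
  unfold in_hex in Hcor; simpl in Hcor.
  set (nr := Z.to_nat (pv p - pf p - phS p)).
  set (W := Z.to_nat (phE p - phW p)).
  assert (Hnr : Z.of_nat nr = pv p - pf p - phS p) by (subst nr; lia).
  pose proof (tiling_Up_le_Down (params_region p) (phW p) W (phS p) nr HT) as H.
  assert (Hcol : forall i k, params_region p (Down i k) -> phW p <= i < phW p + Z.of_nat W)
    by (intros i k [Hx _]; unfold tri_on, in_hex in Hx; simpl in Hx; subst W; lia).
  assert (Hrow : forall i k, params_region p (Down i k) -> phS p <= k)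
    by (intros i k [Hx _]; unfold tri_on, in_hex in Hx; simpl in Hx; lia).
  specialize (H Hcol Hrow). apply Nat2Z.inj_le in H. rewrite !list_sum_zsum in H.
  assert (Hsum : zsum (fun k => Z.of_nat (zcount (fun i => params_region p (Down i k)) (phW p) W))
                      (zrange (phS p) nr) <=
     zsum (fun k => Z.of_nat (zcount (fun i => params_region p (Up i k)) (phW p) W) + 1
        - (if holds (pv p - pf p - pb p <= k) then 1 else 0)
        - (if holds (pv p - pf p - pc p <= k) then 1 else 0)) (zrange (phS p) nr)).
  { apply zsum_le. intros k Hk. apply in_zrange in Hk. apply row_Down_le_Up. lia. }
  rewrite zsum_affine, length_zrange, !zsum_indicator in Hsum.
  rewrite (zcount_ext (fun k => pv p - pf p - pb p <= k)
             (fun k => pv p - pf p - pb p <= k <= phS p + Z.of_nat nr)) in Hsum by (intros; lia).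
  rewrite (zcount_ext (fun k => pv p - pf p - pc p <= k)
             (fun k => pv p - pf p - pc p <= k <= phS p + Z.of_nat nr)) in Hsum by (intros; lia).
  rewrite !zcount_interval in Hsum. lia.
Qed.
End RowCount.

(** * Rotation *)

(* Rotation by 120 degrees, induced by the lattice map (i, j) |-> (-i-j, i). *)
Definition rot_tri (t : tri) : tri :=
  match t with Up i j => Up (-i-j-1) i | Down i j => Down (-i-j-2) i end.

Lemma rot_tri3 t : rot_tri (rot_tri (rot_tri t)) = t.
Proof. destruct t as [i j|i j]; simpl; f_equal; lia. Qed.

Lemma adjacent_rot t u : adjacent t u -> adjacent (rot_tri t) (rot_tri u).
Proof.
  assert (HUp : forall i j t, adjacent (Up i j) t -> adjacent (rot_tri (Up i j)) (rot_tri t)).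
  { intros i j t' Ht. apply adjacent_Up_cases in Ht. simpl.
    destruct Ht as [->|[->| ->]]; simpl.
    - replace (Down (- i - j - 2) i) with (Down (- i - j - 1 - 1) i) by (f_equal; lia).
      apply adjacent_Up_Down_left.
    - replace (Down (- (i - 1) - j - 2) (i - 1)) with (Down (- i - j - 1) (i - 1))
        by (f_equal; lia).
      apply adjacent_Up_Down_below.
    - replace (Down (- i - (j - 1) - 2) i) with (Down (- i - j - 1) i) by (f_equal; lia).
      apply adjacent_Up_Down_right. }
  intros H. destruct t as [i j|i j]; [apply HUp; auto|].
  destruct u as [i' j'|i' j'].
  - apply adjacent_sym, HUp, adjacent_sym; auto.
  - exfalso. eapply not_adjacent_Down_Down; eauto.
Qed.

Lemma tileable_rot (R : region) : tileable R -> tileable (fun t => R (rot_tri t)).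
Proof.
  intros [L [Hloz Hcov]].
  exists (fun p => L (rot_tri (fst p), rot_tri (snd p))). split.
  - intros [t1 t2] Hp. simpl in *. destruct (Hloz _ Hp) as (Hadj & H1 & H2). simpl in *.
    split; [|auto].
    apply adjacent_rot, adjacent_rot in Hadj. rewrite !rot_tri3 in Hadj. exact Hadj.
  - intros s Hs. destruct (Hcov _ Hs) as [[q1 q2] [[Hq Hsq] Huniq]]. simpl in Hsq.
    exists (rot_tri (rot_tri q1), rot_tri (rot_tri q2)). simpl. split.
    + cbn [fst snd]. rewrite !rot_tri3. split; auto.
      destruct Hsq as [E|E]; [left|right]; rewrite <- E, rot_tri3; reflexivity.
    + intros [p1 p2] [Hp Hsp]. cbn [fst snd] in *.
      assert (E : (q1, q2) = (rot_tri p1, rot_tri p2))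
        by (apply Huniq; split; auto; simpl; destruct Hsp as [->| ->]; auto).
      injection E as -> ->. rewrite !rot_tri3. reflexivity.
Qed.

Definition rot_params (p : params) : params :=
  {| pu := pv p - pf p; pv := - pu p - pv p + pf p; pf := pf p;
     pa := pb p; pb := pc p; pc := pa p; pa' := pb' p; pb' := pc' p; pc' := pa' p;
     phW := phS p; phE := phN p; phS := - phNE p; phN := - phSW p; phSW := - phE p;
     phNE := - phW p |}.

Lemma params_region_rot p t : params_region (rot_params p) t <-> params_region p (rot_tri t).
Proof.
  assert (E0 : tri_on (in_hex (rot_params p)) t <-> tri_on (in_hex p) (rot_tri t))
    by (destruct t as [i j|i j]; unfold tri_on, in_hex, rot_params; simpl; lia).
  assert (E1 : tri_on (lobeAo (rot_params p)) t <-> tri_on (lobeBo p) (rot_tri t))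
    by (destruct t as [i j|i j]; unfold tri_on, lobeAo, lobeBo, in_down, rot_params; simpl; lia).
  assert (E2 : tri_on (lobeAi (rot_params p)) t <-> tri_on (lobeBi p) (rot_tri t))
    by (destruct t as [i j|i j]; unfold tri_on, lobeAi, lobeBi, in_up, rot_params; simpl; lia).
  assert (E3 : tri_on (lobeBi (rot_params p)) t <-> tri_on (lobeCi p) (rot_tri t))
    by (destruct t as [i j|i j]; unfold tri_on, lobeBi, lobeCi, in_up, rot_params; simpl; lia).
  assert (E4 : tri_on (lobeBo (rot_params p)) t <-> tri_on (lobeCo p) (rot_tri t))
    by (destruct t as [i j|i j]; unfold tri_on, lobeBo, lobeCo, in_down, rot_params; simpl; lia).
  assert (E5 : tri_on (lobeCi (rot_params p)) t <-> tri_on (lobeAi p) (rot_tri t))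
    by (destruct t as [i j|i j]; unfold tri_on, lobeCi, lobeAi, in_up, rot_params; simpl; lia).
  assert (E6 : tri_on (lobeCo (rot_params p)) t <-> tri_on (lobeAo p) (rot_tri t))
    by (destruct t as [i j|i j]; unfold tri_on, lobeCo, lobeAo, in_down, rot_params; simpl; lia).
  unfold params_region. rewrite E0, E1, E2, E3, E4, E5, E6. tauto.
Qed.

Lemma well_formed_rot p : well_formed p -> well_formed (rot_params p).
Proof. unfold well_formed, in_hex, rot_params. simpl. lia. Qed.

Lemma tileable_rot_params p :
  tileable (params_region p) -> tileable (params_region (rot_params p)).
Proof.
  intros HT. apply (tileable_ext (fun t => params_region p (rot_tri t))).
  - intros t. rewrite params_region_rot. tauto.
  - apply tileable_rot, HT.
Qed.

Lemma depth_clearances_nonneg (p : params) : well_formed p -> tileable (params_region p) ->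
  0 <= pv p - pf p - phS p - pb p - pc p /\
  0 <= phNE p - (pu p + pv p) - pa p - pc p /\
  0 <= pu p - phW p - pa p - pb p.
Proof.
  intros Hwf HT.
  pose proof (S_clearance_nonneg p Hwf HT) as HS.
  pose proof (S_clearance_nonneg _ (well_formed_rot p Hwf) (tileable_rot_params p HT)) as HE.
  pose proof (S_clearance_nonneg _ (well_formed_rot _ (well_formed_rot p Hwf))
                (tileable_rot_params _ (tileable_rot_params p HT))) as HW.
  unfold rot_params in HE, HW. simpl in HE, HW. lia.
Qed.

Lemma well_formed_of_triad (T : triad) : is_triad T -> well_formed (params_of_triad T).
Proof.
  intros HT. destruct (is_triad_Z T HT) as (Hf & _ & _ & _ & _ & _ & _ & Hl).
  assert (LAo : forall w, lobeA_out T w -> hex_pts T w) by (apply Hl; simpl; tauto).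
  assert (LAi : forall w, lobeA_in T w -> hex_pts T w) by (apply Hl; simpl; tauto).
  assert (LBi : forall w, lobeB_in T w -> hex_pts T w) by (apply Hl; simpl; tauto).
  assert (LBo : forall w, lobeB_out T w -> hex_pts T w) by (apply Hl; simpl; tauto).
  assert (LCi : forall w, lobeC_in T w -> hex_pts T w) by (apply Hl; simpl; tauto).
  assert (LCo : forall w, lobeC_out T w -> hex_pts T w) by (apply Hl; simpl; tauto).
  unfold lobeA_out, lobeA_in, lobeB_in, lobeB_out, lobeC_in, lobeC_out, up_pts, down_pts,
    ptA, ptB, ptC, hex_pts in *. simpl in *.
  set (u := fst (tA T)) in *. set (v := snd (tA T)) in *.
  set (a := Z.of_nat (ta T)) in *. set (b := Z.of_nat (tb T)) in *. set (c := Z.of_nat (tc T)) in *.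
  set (a' := Z.of_nat (ta' T)) in *. set (b' := Z.of_nat (tb' T)) in *.
  set (c' := Z.of_nat (tc' T)) in *. set (f := Z.of_nat (tf T)) in *.
  assert (Hf' : a' + b' + c' <= f) by (subst a' b' c' f; lia).
  assert (Hnn : 0 <= a /\ 0 <= b /\ 0 <= c /\ 0 <= a' /\ 0 <= b' /\ 0 <= c')
    by (subst a b c a' b' c'; lia).
  pose proof (LAo (u - a, v + a) ltac:(simpl; lia)) as K0.
  pose proof (LAo (u, v + a) ltac:(simpl; lia)) as K1.
  pose proof (LAo (u, v) ltac:(simpl; lia)) as K2.
  pose proof (LAi (u, v - a') ltac:(simpl; lia)) as K3.
  pose proof (LAi (u + a', v - a') ltac:(simpl; lia)) as K4.
  pose proof (LBi (u, v - f) ltac:(simpl; lia)) as K5.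
  pose proof (LBi (u + b', v - f) ltac:(simpl; lia)) as K6.
  pose proof (LBi (u, v - f + b') ltac:(simpl; lia)) as K7.
  pose proof (LBo (u - b, v - f) ltac:(simpl; lia)) as K8.
  pose proof (LBo (u, v - f - b) ltac:(simpl; lia)) as K9.
  pose proof (LCi (u + f - c', v - f) ltac:(simpl; lia)) as K10.
  pose proof (LCi (u + f, v - f) ltac:(simpl; lia)) as K11.
  pose proof (LCi (u + f - c', v - f + c') ltac:(simpl; lia)) as K12.
  pose proof (LCo (u + f + c, v - f) ltac:(simpl; lia)) as K13.
  pose proof (LCo (u + f + c, v - f - c) ltac:(simpl; lia)) as K14.
  simpl in K0, K1, K2, K3, K4, K5, K6, K7, K8, K9, K10, K11, K12, K13, K14.
  unfold well_formed, in_hex, params_of_triad. simpl. fold u v a b c a' b' c' f.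
  repeat split; lia.
Qed.

Lemma depths_nonneg_of_tileable (T : triad) : is_triad T -> tileable (triad_region T) ->
  0 <= S_depth T /\ 0 <= NE_depth T /\ 0 <= NW_depth T.
Proof.
  intros HT Ht.
  assert (Hp : tileable (params_region (params_of_triad T)))
    by (apply (tileable_ext (triad_region T)); [intros t; apply triad_region_params|exact Ht]).
  pose proof (depth_clearances_nonneg _ (well_formed_of_triad T HT) Hp) as H.
  unfold S_depth, NE_depth, NW_depth, ptA, ptB, params_of_triad in *. simpl in *. lia.
Qed.

Lemma squeezing_preserves_depths (T T' : triad) : is_triad T -> squeezing T T' ->
  S_depth T' = S_depth T /\ NE_depth T' = NE_depth T /\ NW_depth T' = NW_depth T.
Proof.
  intros HT Hs. destruct (is_triad_Z T HT) as (Hf & _).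
  destruct Hs as [d T0 Hd|d T0 Hd|d T0 Hd|d T0 Hd|d T0 Hd|d T0 Hd];
  unfold S_depth, NE_depth, NW_depth, ptA, ptB, sq_out_A, sq_in_A, sq_out_B, sq_in_B,
    sq_out_C, sq_in_C; simpl; lia.
Qed.

Lemma tileable_squeezing (T T' : triad) :
  triad_squeezing T T' -> tileable (triad_region T) -> tileable (triad_region T').
Proof.
  intros (HT & HT' & Hs) Ht.
  destruct (depths_nonneg_of_tileable T HT Ht) as (DS & DE & DW).
  destruct (squeezing_preserves_depths T T' HT Hs) as (ES & EE & EW).
  apply tileable_of_depths; [exact HT' | lia ..].
Qed.

Theorem lemma2p1 :
  (* (a) *)
  (forall T : triad, is_triad T ->
     (tileable (triad_region T) <->
      (0 <= S_depth T /\ 0 <= NE_depth T /\ 0 <= NW_depth T))) /\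
  (* (b) *)
  (forall T T' : triad, is_triad T -> squeezing T T' ->
     S_depth T' = S_depth T /\ NE_depth T' = NE_depth T /\
     NW_depth T' = NW_depth T) /\
  (* (c) *)
  (forall T T' : triad, is_triad T -> tileable (triad_region T) ->
     clos_refl_trans triad triad_squeezing T T' ->
     tileable (triad_region T')).
Proof.
  split; [|split].
  - intros T HT. split.
    + apply depths_nonneg_of_tileable, HT.
    + intros (HS & HE & HW). apply tileable_of_depths; assumption.
  - exact squeezing_preserves_depths.
  - intros T T' _ Ht Hsq.
    induction Hsq as [T1 T2 Hstep| |T1 T2 T3 _ IH12 _ IH23]; auto.
    apply (tileable_squeezing T1 T2 Hstep Ht).
Qed.
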